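(* Let $1\le n\le L$. If $q_i=p_i$ for all $i$, then $$Z_{L,n}=\binom{L-1}{n-1}\,e_{n-1}(p_1,\dots,p_n)^{L-n},$$ where $e_{n-1}$ is the elementary symmetric polynomial of degree $n-1$.
   Context: Particle labels are taken modulo $n$. $\Omega_{L,n}$ is the set of words $w_1\cdots w_L$ on the ring $\mathbb{Z}/L\mathbb{Z}$ over the alphabet $\{\bullet_1,\dots,\bullet_n,\Box_1,\dots,\Box_n\}$ in which each $\bullet_k$ occurs exactly once, the $\bullet_1,\dots,\bullet_n$ appear in this cyclic order, and the remaining $L-n$ letters are arbitrary $\Box_i$'s. For $w\in\Omega_{L,n}$ let $b_k$ be the position of $\bullet_k$ and $C_k$ the set of positions strictly between $b_k$ and $b_{k+1}$ going cyclically forward ($b_{n+1}=b_1$). For $i,k\in\{1,\dots,n\}$ set $w_\Box(i,k)=p_1\cdots p_{i-1}q_{i+1}\cdots q_kp_{k+1}\cdots p_n$ if $i\le k$ and $w_\Box(i,k)=q_1\cdots q_kp_{k+1}\cdots p_{i-1}q_{i+1}\cdots q_n$ if $k<i$ (empty products are $1$). The weight is $\mathrm{wt}(w)=\prod_{k=1}^n\prod_{j\in C_k}w_\Box(i_j,k)$ where $w_j=\Box_{i_j}$. The restricted partition function is $Z_{L,n}=\sum\mathrm{wt}(w)$, the sum over $w\in\Omega_{L,n}$ with $w_1=\bullet_1$; it is a polynomial in $p_1,\dots,p_n,q_1,\dots,q_n$, and the claim is about its specialization. *)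

From HB Require Import structures.
From mathcomp Require Import all_boot all_order all_algebra.
Set Implicit Arguments. Unset Strict Implicit. Unset Printing Implicit Defensive.
Import Order.TTheory GRing.Theory.
Local Open Scope ring_scope.

(* Conventions: particle labels 1..n are represented by 'I_n (label m+1 <-> m),
   positions 1..L of the ring Z/LZ by 'I_L (position j+1 <-> j).
   A letter is  inl k = bullet_(k+1)  or  inr i = box_(i+1). *)
Definition letter (n : nat) := ('I_n + 'I_n)%type.
Definition word (L n : nat) := {ffun 'I_L -> letter n}.

Definition wbox_factor (R : pzRingType) n (p q : 'I_n -> R) (i k m : 'I_n) : R :=
  if m == i then 1
  else if (i <= k)%N then
    (if (m < i)%N then p m else if (m <= k)%N then q m else p m)
  else
    (if (m <= k)%N then q m else if (m < i)%N then p m else q m).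

Definition wbox (R : comPzRingType) n (p q : 'I_n -> R) (i k : 'I_n) : R :=
  \prod_(m < n) wbox_factor p q i k m.

Definition restricted_word L n (w : word L n) : bool :=
  [&& [forall k : 'I_n, #|[set j | w j == inl k]| == 1%N],
      [forall j : 'I_L, (val j == 0%N) ==>
          [exists k : 'I_n, (val k == 0%N) && (w j == inl k)]] &
      (* bullets in cyclic order, read from position 1 where bullet_1 sits *)
      [forall k1 : 'I_n, forall k2 : 'I_n, forall j1 : 'I_L, forall j2 : 'I_L,
          [&& (k1 < k2)%N, w j1 == inl k1 & w j2 == inl k2] ==> (j1 < j2)%N]].

Definition bpos L n (w : word L n) (k : 'I_n) : nat :=
  if [pick j | w j == inl k] is Some j then val j else 0%N.

Definition next_label n (k : 'I_n) : 'I_n := ordS k.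

(* C_k: positions strictly between b_k and b_(k+1), going cyclically forward;
   when b_(k+1) = b_k (n = 1) this is every other position of the ring. *)
Definition inC L n (w : word L n) (k : 'I_n) (j : 'I_L) : bool :=
  let bk := bpos w k in
  let bk1 := bpos w (next_label k) in
  let d := if bk1 == bk then L else ((bk1 + L - bk) %% L)%N in
  let e := ((val j + L - bk) %% L)%N in
  (0 < e)%N && (e < d)%N.

Definition box_label n (x : letter n) (dflt : 'I_n) : 'I_n :=
  match x with inr i => i | inl _ => dflt end.

Definition wt (R : comPzRingType) L n (p q : 'I_n -> R) (w : word L n) : R :=
  \prod_(k < n) \prod_(j < L | inC w k j) wbox p q (box_label (w j) k) k.

Definition Z_Ln (R : comPzRingType) L n (p q : 'I_n -> R) : R :=
  \sum_(w : word L n | restricted_word w) wt p q w.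

Definition elem_sym (R : comPzRingType) n (r : nat) (p : 'I_n -> R) : R :=
  \sum_(A : {set 'I_n} | #|A| == r) \prod_(m in A) p m.

From HB Require Import structures.
From mathcomp Require Import all_boot all_order all_algebra zify.
Import GRing.Theory.
Set Implicit Arguments. Unset Strict Implicit.
Local Open Scope ring_scope.

(* For q = p the factor w_Box(i, k) no longer depends on k: it is the product
   of all p_m with m <> i.  In a restricted word every box lies in exactly one
   gap C_k, so the weight becomes a product over positions of the weights of
   the letters.  A restricted word is then the same thing as a set S of n
   bullet positions containing position 1 (the bullets being forced by the
   cyclic order) together with an arbitrary box at each of the L - n other
   positions; summing the box weights at one position gives e_(n-1)(p), and
   there are binomial(L-1, n-1) such sets S. *)

Lemma modn_lt_double x d : (0 < d)%N -> (x < d + d)%N ->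
  (x %% d = if (x < d)%N then x else x - d)%N.
Proof.
move=> d_gt0 x_lt_dd; case: ltnP => [/modn_small // | le_dx].
by rewrite -{1}(subnK le_dx) modnDr modn_small //; lia.
Qed.

Section BulletPositions.

Variables (L n : nat) (w : word L n.+1).
Hypothesis w_restricted : restricted_word w.

Lemma bposP k : exists2 j : 'I_L, w j = inl k & bpos w k = j.
Proof.
case/and3P: w_restricted => /forallP/(_ k)/cards1P[j def_j] _ _.
have wj : w j = inl k by apply/eqP; have := set11 j; rewrite -def_j inE.
exists j => //; rewrite /bpos; case: pickP => [j' /eqP wj' | /(_ j)]; last by rewrite wj eqxx.
have : j' \in [set j0 | w j0 == inl k] by rewrite inE wj'.
by rewrite def_j inE => /eqP ->.
Qed.

Lemma bpos_inl j k : w j = inl k -> bpos w k = j.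
Proof.
move=> wj; have [j' wj' ->] := bposP k.
case/and3P: w_restricted => /forallP/(_ k)/cards1P[j0 def_j0] _ _.
have : j \in [set j0 | w j0 == inl k] by rewrite inE wj.
have : j' \in [set j0 | w j0 == inl k] by rewrite inE wj'.
by rewrite def_j0 !inE => /eqP -> /eqP ->.
Qed.

Lemma bpos_ltL k : (bpos w k < L)%N.
Proof. by have [j _ ->] := bposP k. Qed.

Lemma ltn_bpos (k1 k2 : 'I_n.+1) : (k1 < k2)%N -> (bpos w k1 < bpos w k2)%N.
Proof.
move=> lt_k12; have [j1 w1 ->] := bposP k1; have [j2 w2 ->] := bposP k2.
case/and3P: w_restricted => _ _ /forallP/(_ k1)/forallP/(_ k2)/forallP/(_ j1)/forallP/(_ j2).
by rewrite lt_k12 w1 w2 !eqxx.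
Qed.

Lemma leq_bpos (k1 k2 : 'I_n.+1) : (k1 <= k2)%N -> (bpos w k1 <= bpos w k2)%N.
Proof.
rewrite leq_eqVlt => /orP[/eqP/val_inj-> // | /ltn_bpos/ltnW //].
Qed.

Lemma bpos0 (k : 'I_n.+1) : val k = 0%N -> bpos w k = 0%N.
Proof.
move=> k0; have [j _ _] := bposP k; have L_gt0 : (0 < L)%N by apply: leq_ltn_trans (ltn_ord j).
case/and3P: w_restricted => _ /forallP/(_ (Ordinal L_gt0))/existsP[k' /andP[/eqP k'0 /eqP wk']] _.
by rewrite (_ : k = k') ?(bpos_inl wk') //; apply: val_inj; rewrite k0 k'0.
Qed.

Lemma next_label_val (k : 'I_n.+1) : (k.+1 < n.+1)%N -> val (next_label k) = k.+1.
Proof. by move=> ?; rewrite /= modn_small. Qed.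

(* The wrap-around gap C_n is everything after b_n, because bullet_1 sits at the first position. *)
Lemma inC_restricted k j :
  inC w k j = (bpos w k < j)%N && ((k.+1 == n.+1) || (j < bpos w (next_label k))%N).
Proof.
rewrite /inC; change (\val j) with (nat_of_ord j).
have jL := ltn_ord j; have kn := ltn_ord k.
have bkL := bpos_ltL k; have bk1L := bpos_ltL (next_label k).
rewrite !modn_lt_double; try lia.
case: (ltnP k.+1 n.+1) => k1n.
  have := @ltn_bpos k (next_label k); rewrite next_label_val // ltnSn => /(_ isT) ?.
  by repeat case: ifP => ?; lia.
have k1_val : val (next_label k) = 0%N by rewrite /= (_ : k.+1 = n.+1) ?modnn //; lia.
have := bpos0 k1_val; have [k0 | k_gt0] := eqVneq (nat_of_ord k) 0%N.
  by have := bpos0 k0; repeat case: ifP => ?; lia.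
have := @ltn_bpos (next_label k) k; rewrite k1_val lt0n k_gt0 => /(_ isT) ?.
by repeat case: ifP => ?; lia.
Qed.

Lemma inC_inl j k' k : w j = inl k' -> inC w k j = false.
Proof.
move=> wj; rewrite inC_restricted; apply/negbTE/andP => -[lt_bk_j].
have bj := bpos_inl wj; have k'n := ltn_ord k'.
have lt_kk' : (k < k')%N by rewrite ltnNge; apply/negP => /leq_bpos; lia.
have lt_k1n : (k.+1 < n.+1)%N by lia.
have le_next_j : (bpos w (next_label k) <= j)%N by rewrite -bj leq_bpos // next_label_val.
by rewrite ltn_eqF //=; lia.
Qed.

Lemma inC_inr j i : w j = inr i -> exists k0, forall k, inC w k j = (k == k0).
Proof.
move=> wj; have bpos_ord0 : (bpos w ord0 <= j)%N by rewrite bpos0.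
have [k0 bk0_le k0_max] := @arg_maxnP _ ord0 (fun k => bpos w k <= j)%N val bpos_ord0.
have bk0_lt : (bpos w k0 < j)%N.
  rewrite ltn_neqAle bk0_le andbT; apply/eqP => bk0_j.
  have [j' wj' bk0_j'] := bposP k0.
  by move: wj'; rewrite (_ : j' = j) ?wj //; apply: val_inj; rewrite /= -bk0_j' bk0_j.
exists k0 => k; rewrite inC_restricted; have kn := ltn_ord k; have k0n := ltn_ord k0.
apply/idP/eqP => [/andP[lt_bk_j next_k] | ->].
  have le_kk0 : (k <= k0)%N by apply: k0_max; lia.
  apply/ord_inj/eqP; rewrite eqn_leq le_kk0 leqNgt; apply/negP => lt_kk0.
  have lt_k1n : (k.+1 < n.+1)%N by lia.
  move: next_k; rewrite ltn_eqF //= => lt_j_next.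
  have : (bpos w (next_label k) <= bpos w k0)%N by rewrite leq_bpos // next_label_val.
  lia.
rewrite bk0_lt /=; case: (ltnP k0.+1 n.+1) => k0n'; last by apply/orP; left; lia.
apply/orP; right; rewrite ltnNge; apply/negP => /k0_max.
by rewrite next_label_val // /= ltnn.
Qed.

End BulletPositions.

Definition prod_but (R : comPzRingType) n (p : 'I_n -> R) (i : 'I_n) : R :=
  \prod_(m < n | m != i) p m.

Definition letter_weight (R : comPzRingType) n (p : 'I_n -> R) (x : letter n) : R :=
  if x is inr i then prod_but p i else 1.

Lemma wbox_eq_prod_but (R : comPzRingType) n (p q : 'I_n -> R) i k :
  q =1 p -> wbox p q i k = prod_but p i.
Proof.
move=> qp; rewrite /wbox /prod_but [RHS]big_mkcond; apply: eq_bigr => m _.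
by rewrite /wbox_factor !qp; case: eqP => //= _; repeat case: ifP.
Qed.

Lemma wt_restricted (R : comPzRingType) L n (p q : 'I_n.+1 -> R) (w : word L n.+1) :
  q =1 p -> restricted_word w -> wt p q w = \prod_j letter_weight p (w j).
Proof.
move=> qp w_restricted; rewrite /wt.
under [LHS]eq_bigr do rewrite big_mkcond.
rewrite exchange_big; apply: eq_bigr => j _; case wj: (w j) => [k' | i] /=.
  by apply: big1 => k _; rewrite (inC_inl w_restricted k wj).
have [k0 inC_k0] := inC_inr w_restricted wj.
rewrite (bigD1 k0) //= inC_k0 eqxx (wbox_eq_prod_but _ _ qp) big1 ?mulr1 // => k /negbTE kk0.
by rewrite inC_k0 kk0.
Qed.

Lemma sum_prod_but (R : comPzRingType) n (p : 'I_n.+1 -> R) :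
  \sum_i prod_but p i = elem_sym n p.
Proof.
rewrite /elem_sym /prod_but.
pose missing (A : {set 'I_n.+1}) : 'I_n.+1 := odflt ord0 [pick x in ~: A].
rewrite (reindex (fun i : 'I_n.+1 => [set~ i])) /=.
  apply: eq_big => [i | i _]; first by rewrite cardsC1 card_ord eqxx.
  by apply: eq_bigl => m; rewrite !inE.
exists missing => [i _ | A].
  rewrite /missing; case: pickP => [y | /(_ i)]; last by rewrite !inE eqxx.
  by rewrite !inE negbK => /eqP.
rewrite inE => /eqP cardA.
have /cards1P[x def_x] : #|~: A| == 1%N by rewrite cardsCs setCK card_ord cardA; apply/eqP; lia.
rewrite /missing def_x; case: pickP => [y | /(_ x)]; last by rewrite !inE eqxx.
by rewrite inE => /eqP -> /=; rewrite -def_x setCK.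
Qed.

Definition is_bullet n (x : letter n) : bool := if x is inl _ then true else false.

Definition bullet_set L n (w : word L n) : {set 'I_L} := [set j | is_bullet (w j)].

Definition rank L (S : {set 'I_L}) (j : 'I_L) : nat := #|[set x in S | (x < j)%N]|.

Definition fits_at L n (S : {set 'I_L}) (j : 'I_L) (x : letter n.+1) : bool :=
  if j \in S then x == inl (inord (rank S j)) else ~~ is_bullet x.

Definition fits L n (S : {set 'I_L}) (w : word L n.+1) : bool :=
  [forall j, fits_at S j (w j)].

Definition admissible L n (S : {set 'I_L.+1}) : bool := (ord0 \in S) && (#|S| == n.+1).

Section Rank.

Variables (L : nat) (S : {set 'I_L}).

Lemma ltn_rank (x y : 'I_L) : x \in S -> (x < y)%N -> (rank S x < rank S y)%N.
Proof.
move=> xS lt_xy; apply/proper_card/properP; split.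
  by apply/subsetP => z; rewrite !inE => /andP[-> /= ?]; lia.
by exists x; rewrite !inE ?xS //= ltnn.
Qed.

Lemma leq_rank (x y : 'I_L) : (x <= y)%N -> (rank S x <= rank S y)%N.
Proof.
by move=> le_xy; apply/subset_leq_card/subsetP => z; rewrite !inE => /andP[-> /= ?]; lia.
Qed.

Lemma rank_lt_card x : x \in S -> (rank S x < #|S|)%N.
Proof.
move=> xS; apply/proper_card/properP; split; first by apply/subsetP => z; rewrite inE => /andP[].
by exists x; rewrite // !inE ltnn andbF.
Qed.

Lemma rank_inj : {in S &, injective (rank S)}.
Proof.
move=> x y xS yS eq_rk; apply: val_inj; case: (ltngtP x y) => // [/(ltn_rank xS) | /(ltn_rank yS)].
  by rewrite eq_rk ltnn.
by rewrite eq_rk ltnn.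
Qed.

Lemma rank_ord0 (z : 'I_L) : val z = 0%N -> rank S z = 0%N.
Proof. by move=> z0; apply/eqP; rewrite cards_eq0; apply/eqP/setP => x; rewrite !inE z0 ltn0 andbF. Qed.

End Rank.

Lemma card_ord_lt N (k : 'I_N) : #|[set k' : 'I_N | (k' < k)%N]| = k.
Proof.
have le_kN : (k <= N)%N := ltnW (ltn_ord k).
have -> : [set k' : 'I_N | (k' < k)%N] = widen_ord le_kN @: [set: 'I_k].
  apply/setP => z; rewrite inE; apply/idP/imsetP => [lt_zk | [x _ ->]]; last exact: (ltn_ord x).
  by exists (Ordinal lt_zk) => //; apply: val_inj.
by rewrite card_imset ?cardsT ?card_ord // => x y /(congr1 val) /= /val_inj.
Qed.

Section BulletSet.

Variables (L n : nat) (w : word L.+1 n.+1).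
Hypothesis w_restricted : restricted_word w.

Let bullet_pos k : 'I_L.+1 := Ordinal (bpos_ltL w_restricted k).

Lemma w_bullet_pos k : w (bullet_pos k) = inl k.
Proof. by have [j wj bj] := bposP w_restricted k; rewrite (_ : bullet_pos k = j) //; apply: val_inj. Qed.

Lemma bullet_pos_inj : injective bullet_pos.
Proof. by move=> k1 k2 eq_pos; move: (w_bullet_pos k1); rewrite eq_pos w_bullet_pos => -[]. Qed.

Lemma bullet_set_image : bullet_set w = bullet_pos @: setT.
Proof.
apply/setP => j; rewrite inE; case wj: (w j) => [k | i] /=.
  by apply/esym/imsetP; exists k => //; apply: val_inj; rewrite /= (bpos_inl w_restricted wj).
by apply/esym/imsetP => -[k _ def_j]; move: wj; rewrite def_j w_bullet_pos.
Qed.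

Lemma rank_bullet_set j k : w j = inl k -> rank (bullet_set w) j = k.
Proof.
move=> wj; have bj := bpos_inl w_restricted wj.
rewrite /rank -[RHS](card_ord_lt k) -[RHS](card_imset _ bullet_pos_inj); apply: eq_card => x.
rewrite bullet_set_image !inE; apply/andP/imsetP => [[/imsetP[k' _ ->] lt_k'j] | [k' /[!inE] lt_k'k ->]].
  have /= lt_bk'_j : (bpos w k' < j)%N := lt_k'j.
  by exists k'; rewrite // inE ltnNge; apply/negP => /(leq_bpos w_restricted); lia.
by rewrite imset_f //= -bj ltn_bpos.
Qed.

Lemma bullet_set_admissible : admissible n (bullet_set w).
Proof.
rewrite /admissible bullet_set_image (card_imset _ bullet_pos_inj) cardsT card_ord eqxx andbT.
by apply/imsetP; exists ord0 => //; apply: val_inj; rewrite /= (bpos0 w_restricted (k:=ord0)).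
Qed.

Lemma fits_bullet_set : fits (bullet_set w) w.
Proof.
apply/forallP => j; rewrite /fits_at inE; case wj: (w j) => [k | i] //=.
by rewrite (rank_bullet_set wj) inord_val.
Qed.

End BulletSet.

Lemma fits_eq_bullet_set L n (S : {set 'I_L}) (w : word L n.+1) : fits S w -> S = bullet_set w.
Proof.
move/forallP => fits_w; apply/setP => j; rewrite inE; move: (fits_w j); rewrite /fits_at.
by case: (j \in S) => [/eqP -> | /negbTE ->].
Qed.

Lemma fits_restricted L n (S : {set 'I_L.+1}) (w : word L.+1 n.+1) :
  admissible n S -> fits S w -> restricted_word w.
Proof.
case/andP => S0 /eqP cardS /forallP fits_w.
pose label j : 'I_n.+1 := inord (rank S j).
have w_in j : j \in S -> w j = inl (label j).
  by move=> jS; move: (fits_w j); rewrite /fits_at jS => /eqP.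
have w_out j k : w j = inl k -> j \in S.
  by move=> wj; move: (fits_w j); rewrite /fits_at wj; case: (j \in S).
have label_val j : j \in S -> val (label j) = rank S j.
  by move=> jS; rewrite /= inordK // -cardS rank_lt_card.
have label_inj : {in S &, injective label}.
  by move=> x y xS yS /(congr1 val) /=; rewrite !label_val //; apply: rank_inj.
have label_onto : label @: S = setT.
  by apply/eqP; rewrite eqEcard subsetT cardsT card_ord (card_in_imset label_inj) cardS ltnSn.
apply/and3P; split.
- apply/forallP => k; have /imsetP[j0 j0S ->] : k \in label @: S by rewrite label_onto inE.
  apply/cards1P; exists j0; apply/setP => j; rewrite !inE.
  apply/eqP/eqP => [wj | ->]; last exact: w_in.
  have jS := w_out _ _ wj.
  by apply: label_inj => //; move: wj; rewrite w_in // => -[].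
- apply/forallP => j; apply/implyP => /eqP j0; rewrite (_ : j = ord0); last exact: val_inj.
  by apply/existsP; exists (label ord0); rewrite w_in // eqxx andbT label_val // rank_ord0.
- apply/forallP => k1; apply/forallP => k2; apply/forallP => j1; apply/forallP => j2.
  apply/implyP => /and3P[lt_k12 /eqP w1 /eqP w2].
  have j1S := w_out _ _ w1; have j2S := w_out _ _ w2.
  move: w1 w2 lt_k12; rewrite !w_in // => -[<-] [<-]; rewrite !label_val // => lt_rank.
  by rewrite ltnNge; apply/negP => /(leq_rank S); lia.
Qed.

Lemma sum_admissible_fits (R : pzSemiRingType) L n (w : word L.+1 n.+1) :
  \sum_(S | admissible n S) (fits S w)%:R = (restricted_word w)%:R :> R.
Proof.
have [w_restricted | not_restricted] := boolP (restricted_word w).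
  rewrite (bigD1 (bullet_set w)) ?bullet_set_admissible //= fits_bullet_set //.
  rewrite big1 ?addr0 // => S /andP[_ S_ne]; case: (boolP (fits S w)) => // /fits_eq_bullet_set S_eq.
  by rewrite S_eq eqxx in S_ne.
apply: big1 => S admS; case: (boolP (fits S w)) => // fitsS.
by rewrite (fits_restricted admS fitsS) in not_restricted.
Qed.

Lemma fits_prod (R : comPzSemiRingType) L n (S : {set 'I_L}) (w : word L n.+1) :
  (fits S w)%:R = \prod_j (fits_at S j (w j))%:R :> R.
Proof.
have [/forallP fits_w | /forallPn[j not_fits]] := boolP (fits S w).
  by rewrite big1 // => j _; rewrite fits_w.
by rewrite (bigD1 j) //= (negbTE not_fits) mul0r.
Qed.

Lemma sum_fits_at (R : comPzRingType) L n (p : 'I_n.+1 -> R) (S : {set 'I_L}) j :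
  \sum_x (fits_at S j x)%:R * letter_weight p x = if j \in S then 1 else \sum_i prod_but p i.
Proof.
rewrite /fits_at; case: ifP => jS.
  by rewrite (bigD1 (inl (inord (rank S j)))) //= eqxx mul1r big1 ?addr0 // => x /negbTE ->; rewrite mul0r.
rewrite big_sumType /= big1 ?add0r => [|k _]; last by rewrite mul0r.
by apply: eq_bigr => i _; rewrite mul1r.
Qed.

Lemma sum_fitting_words (R : comPzRingType) L n (p : 'I_n.+1 -> R) (S : {set 'I_L}) :
  #|S| = n.+1 ->
  \sum_(w : word L n.+1) (fits S w)%:R * \prod_j letter_weight p (w j) =
  (\sum_i prod_but p i) ^+ (L - n.+1).
Proof.
move=> cardS; under eq_bigr do rewrite fits_prod -big_split /=.
rewrite -(bigA_distr_bigA (fun j x => (fits_at S j x)%:R * letter_weight p x)) /=.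
under eq_bigr do rewrite sum_fits_at.
transitivity (\prod_(j in ~: S) \sum_i prod_but p i).
  by rewrite [RHS]big_mkcond; apply: eq_bigr => j _; rewrite inE; case: (j \in S).
by rewrite prodr_const; congr (_ ^+ _); have := cardsC S; rewrite card_ord cardS; lia.
Qed.

Lemma card_admissible L n : #|@admissible L n| = 'C(L, n).
Proof.
have drop0_inj : {in @admissible L n &, injective (fun S => S :\ ord0)}.
  by move=> S1 S2 /andP[S1_0 _] /andP[S2_0 _] eqS; rewrite -(setD1K S1_0) eqS setD1K.
have -> : 'C(L, n) = 'C(#|[set~ @ord0 L]|, n) by rewrite cardsC1 card_ord.
rewrite -(card_in_imset drop0_inj) -cards_draws.
apply: eq_card => B; rewrite inE; apply/imsetP/andP => [[S /andP[S0 /eqP cardS] ->] | ].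
  split; first by apply/subsetP => x; rewrite !inE => /andP[].
  by move: cardS; rewrite (cardsD1 ord0 S) S0 add1n => -[<-].
case=> /subsetP B_sub /eqP cardB.
have B0 : ord0 \notin B by apply/negP => /B_sub; rewrite !inE eqxx.
exists (ord0 |: B); last by rewrite setU1K.
by apply/andP; rewrite setU11 cardsU1 B0 cardB.
Qed.

Theorem proposition4p10 (R : comPzRingType) (L n : nat) (p q : 'I_n -> R) :
  (1 <= n)%N -> (n <= L)%N -> (forall i, q i = p i) ->
  Z_Ln L p q = (binomial L.-1 n.-1)%:R * elem_sym n.-1 p ^+ (L - n).
Proof.
case: n p q => [// | n] p q _; case: L => [// | L] _ qp /=.
have -> : Z_Ln L.+1 p q =
    \sum_(w : word L.+1 n.+1) (restricted_word w)%:R * \prod_j letter_weight p (w j).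
  rewrite /Z_Ln big_mkcond; apply: eq_bigr => w _.
  by case: ifP => [w_restricted | _]; rewrite ?mul1r ?mul0r ?(wt_restricted qp).
under eq_bigr do rewrite -sum_admissible_fits mulr_suml.
rewrite exchange_big (eq_bigr (fun _ => elem_sym n p ^+ (L - n))); last first.
  by move=> S /andP[_ /eqP cardS]; rewrite sum_fitting_words // sum_prod_but subSS.
by rewrite sumr_const card_admissible mulr_natl.
Qed.
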